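(* Let $f:\mathcal{P}^n\to X$ be an onto, efficient and tops-only rule. Then $f$ is NOM if and only if at least one of the following holds: (i) there is at most one agent $i\in N$ with $V_i\neq\emptyset$ and, moreover, $SV_i=V_i$; (ii) there is $y\in X$ such that $SV_i=V_i\subseteq\{y\}$ for each $i\in N$.
   Context: $N=\{1,\dots,n\}$, $n\ge2$, agents; $X$ finite alternatives, $|X|\ge2$; $\mathcal{P}$ all strict linear orders on $X$; $t(P_i)$ the top of $P_i$. A rule $f:\mathcal{P}^n\to X$ is onto; tops-only if $f(P)=f(P')$ whenever all tops coincide; efficient if for each $P$ there is no $x\in X$ with $xP_if(P)$ for all $i$. Option set $O^f(P_i)=\{f(P_i,P_{-i}):P_{-i}\in\mathcal{P}^{n-1}\}$. $P_i'$ is a manipulation at $P_i$ if $f(P_i',P_{-i})P_if(P_i,P_{-i})$ for some $P_{-i}$; it is obvious if the $P_i$-worst element of $O^f(P_i')$ is strictly $P_i$-better than the $P_i$-worst element of $O^f(P_i)$, or the $P_i$-best element of $O^f(P_i')$ is strictly $P_i$-better than the $P_i$-best element of $O^f(P_i)$. $f$ is NOM if there are no obvious manipulations. Agent $i$ vetoes $x$ via $P_i$ if $x\notin O^f(P_i)$; $V_i$ = alternatives $i$ vetoes via some preference; $\mathcal{V}_i^x$ = preferences via which $i$ vetoes $x$; $i$ strongly vetoes $x$ if $\mathcal{V}_i^x=\{P_i:t(P_i)\ne x\}$; $SV_i$ = set of alternatives strongly vetoed by $i$. *)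

From mathcomp Require Import all_boot.
Set Implicit Arguments. Unset Strict Implicit. Unset Printing Implicit Defensive.

Definition is_strict_linear_order (X : finType) (r : rel X) : Prop :=
  irreflexive r /\ transitive r /\ (forall x y, x != y -> r x y || r y x).

Definition pref (X : finType) := {r : rel X | is_strict_linear_order r}.

Definition prefers (X : finType) (P : pref X) (x y : X) : bool := sval P x y.

Definition is_top (X : finType) (P : pref X) (x : X) : Prop :=
  forall y, y != x -> prefers P x y.

Definition profile (n : nat) (X : finType) := 'I_n -> pref X.

Definition rule (n : nat) (X : finType) := profile n X -> X.

Definition upd n (X : finType) (P : profile n X) (i : 'I_n) (Q : pref X)
  : profile n X := fun j => if j == i then Q else P j.

Definition onto n (X : finType) (f : rule n X) : Prop :=
  forall x, exists P, f P = x.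

Definition tops_only n (X : finType) (f : rule n X) : Prop :=
  forall P P' : profile n X,
    (forall i x, is_top (P i) x <-> is_top (P' i) x) -> f P = f P'.

Definition efficient n (X : finType) (f : rule n X) : Prop :=
  forall P : profile n X, ~ exists x, forall i, prefers (P i) x (f P).

Definition option_set n (X : finType) (f : rule n X) (i : 'I_n) (Pi : pref X)
  (x : X) : Prop :=
  exists P : profile n X, f (upd P i Pi) = x.

Definition worst_of (X : finType) (R : pref X) (S : X -> Prop) (w : X) : Prop :=
  S w /\ forall z, S z -> z != w -> prefers R z w.
Definition best_of (X : finType) (R : pref X) (S : X -> Prop) (b : X) : Prop :=
  S b /\ forall z, S z -> z != b -> prefers R b z.

Definition manipulation n (X : finType) (f : rule n X) (i : 'I_n)
  (Pi Pi' : pref X) : Prop :=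
  exists P : profile n X, prefers Pi (f (upd P i Pi')) (f (upd P i Pi)).

Definition obvious_manipulation n (X : finType) (f : rule n X) (i : 'I_n)
  (Pi Pi' : pref X) : Prop :=
  manipulation f i Pi Pi' /\
  ((exists w' w, worst_of Pi (option_set f i Pi') w' /\
                 worst_of Pi (option_set f i Pi) w /\ prefers Pi w' w)
   \/
   (exists b' b, best_of Pi (option_set f i Pi') b' /\
                 best_of Pi (option_set f i Pi) b /\ prefers Pi b' b)).

Definition NOM n (X : finType) (f : rule n X) : Prop :=
  forall i Pi Pi', ~ obvious_manipulation f i Pi Pi'.

Definition vetoes_via n (X : finType) (f : rule n X) (i : 'I_n) (Pi : pref X)
  (x : X) : Prop := ~ option_set f i Pi x.

Definition V n (X : finType) (f : rule n X) (i : 'I_n) (x : X) : Prop :=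
  exists Pi, vetoes_via f i Pi x.

Definition SV n (X : finType) (f : rule n X) (i : 'I_n) (x : X) : Prop :=
  forall Pi, vetoes_via f i Pi x <-> ~ is_top Pi x.

Definition set_eq (X : Type) (A B : X -> Prop) : Prop := forall x, A x <-> B x.
Definition nonempty (X : Type) (A : X -> Prop) : Prop := exists x, A x.

From mathcomp Require Import all_boot.
From mathcomp Require Import zify.
From Stdlib Require Import Classical FunctionalExtensionality.
Set Implicit Arguments. Unset Strict Implicit. Unset Printing Implicit Defensive.

(* By efficiency an agent's top is always among her options, so the best
   option never improves by misreporting and only a better worst option can
   make a manipulation obvious.  Hence f is NOM iff every veto is strong: a
   strong veto only removes alternatives that are not the manipulator's top,
   and conversely if i vetoes x via Q while x is still an option at some P_i
   with top b <> x, then by tops-only x is also an option at the preference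
   ranking b first and x last, where Q is an obvious manipulation.  Finally,
   two agents i <> j cannot strongly veto different alternatives x <> z: if
   i ranks z > x > ..., j ranks x > z > ... and everyone else agrees with i,
   efficiency forces the outcome into {x, z}, and each of them is vetoed. *)

Section Preferences.
Variable X : finType.

Lemma pref_irr (P : pref X) x : prefers P x x = false.
Proof. by rewrite /prefers; case: P => r [irr _] /=; apply: irr. Qed.

Lemma pref_asym (P : pref X) x y : prefers P x y -> prefers P y x -> False.
Proof.
rewrite /prefers; case: P => r [irr [tr _]] /= rxy ryx.
by move: (tr _ _ _ rxy ryx); rewrite irr.
Qed.

Lemma slo_flip (r : rel X) :
  is_strict_linear_order r -> is_strict_linear_order (fun x y => r y x).
Proof.
move=> [irr [tr tot]]; split=> [x|]; first exact: irr.
split=> [y x z rxy ryz | x y xy]; first exact: tr ryz rxy.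
by rewrite orbC; apply: tot.
Qed.

(* Induction on the number of alternatives ranked above the candidate. *)
Lemma slo_greatest (r : rel X) (S : X -> Prop) :
  is_strict_linear_order r -> (exists x, S x) ->
  exists b, S b /\ forall z, S z -> z != b -> r b z.
Proof.
move=> [irr [tr tot]] [x Sx].
have [m lt_m] := ubnP #|[pred y | r y x]|.
elim: m x Sx lt_m => [//|m IH b Sb lt_m].
have [[z [Sz zb rbz]] | none] :=
  classic (exists z, [/\ S z, z != b & ~~ r b z]); last first.
  by exists b; split=> // z Sz zb; apply: contra_notT none => rbz; exists z.
have rzb : r z b by move: (tot _ _ zb); rewrite (negbTE rbz) orbF.
have lt_zb : #|[pred y | r y z]| < #|[pred y | r y b]|.
  apply/proper_card/properP; split; last by exists z; rewrite !inE ?irr.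
  by apply/subsetP => y; rewrite !inE => ryz; apply: tr ryz rzb.
exact: IH z Sz (leq_trans lt_zb lt_m).
Qed.

Lemma exists_best_of (P : pref X) (S : X -> Prop) :
  (exists x, S x) -> exists b, best_of P S b.
Proof. exact: slo_greatest (svalP P). Qed.

Lemma exists_worst_of (P : pref X) (S : X -> Prop) :
  (exists x, S x) -> exists w, worst_of P S w.
Proof. exact: slo_greatest (slo_flip (svalP P)). Qed.

Lemma exists_top (P : pref X) (x : X) : exists a, is_top P a.
Proof.
have [a [_ best]] := @exists_best_of P (fun _ => True) (ex_intro _ x I).
by exists a => y ya; apply: best.
Qed.

Lemma top_uniq (P : pref X) a b : is_top P a -> is_top P b -> a = b.
Proof.
move=> ta tb; apply/eqP/negPn/negP => ab.
by apply: pref_asym (ta _ _) (tb _ ab); rewrite eq_sym.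
Qed.

Lemma top_maximal (P : pref X) a x : is_top P a -> prefers P x a = false.
Proof.
move=> ta; apply/negP => xa.
have xa' : x != a by apply: contraTneq xa => ->; rewrite pref_irr.
exact: pref_asym xa (ta _ xa').
Qed.

Lemma exists_other : 2 <= #|X| -> forall x : X, exists b, b != x.
Proof.
move=> X2 x; apply: NNPP => none.
have : #|X| <= #|pred1 x|.
  apply/subset_leq_card/subsetP => y _; rewrite inE.
  by apply: contra_notT none => yx; exists y.
by rewrite card1 leqNgt X2.
Qed.

Lemma slo_of_key (k : X -> nat) :
  injective k -> is_strict_linear_order (fun y z => k y < k z).
Proof.
move=> k_inj; split=> [y|]; first exact: ltnn.
split=> [y x z|y z yz]; first exact: ltn_trans.
by rewrite -neq_ltn; apply: contraNneq yz => /k_inj ->.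
Qed.

(* Smaller keys are preferred: [b] is the top and [x] comes second, or last
   if [x_last]. *)
Definition pref_key (b x : X) (x_last : bool) (y : X) : nat :=
  if y == b then 0 else if y == x then (if x_last then #|X|.+2 else 1)
  else (enum_rank y).+2.

Lemma pref_key_inj b x x_last : injective (pref_key b x x_last).
Proof.
move=> y z; rewrite /pref_key.
have ry : enum_rank y < #|X| := ltn_ord _.
have rz : enum_rank z < #|X| := ltn_ord _.
case: (y =P b); case: (z =P b); case: (y =P x); case: (z =P x); case: x_last;
  move=> ????; subst; try by [|move=> ?; exfalso; lia].
all: by case=> /ord_inj/enum_rank_inj.
Qed.

Definition keyed_pref (b x : X) (x_last : bool) : pref X :=
  exist _ _ (slo_of_key (@pref_key_inj b x x_last)).

Lemma keyed_pref_top b x x_last : is_top (keyed_pref b x x_last) b.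
Proof.
move=> y yb; rewrite /prefers /= /pref_key eqxx (negbTE yb).
by case: (y == x); case: x_last.
Qed.

Lemma keyed_pref_topE b x x_last a : is_top (keyed_pref b x x_last) a -> a = b.
Proof. by move/top_uniq; apply; apply: keyed_pref_top. Qed.

Lemma keyed_pref_second b x y :
  x != b -> y != b -> y != x -> prefers (keyed_pref b x false) x y.
Proof.
move=> xb yb yx.
by rewrite /prefers /= /pref_key (negbTE xb) eqxx (negbTE yb) (negbTE yx).
Qed.

Lemma keyed_pref_last b x y :
  x != b -> y != x -> prefers (keyed_pref b x true) y x.
Proof.
move=> xb yx; rewrite /prefers /= /pref_key (negbTE xb) eqxx (negbTE yx).
have ry : enum_rank y < #|X| := ltn_ord _.
by case: (y == b) => //; lia.
Qed.

End Preferences.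

Section Rules.
Variables (n : nat) (X : finType) (f : rule n X).

Lemma option_set_outcome i (P : profile n X) : option_set f i (P i) (f P).
Proof.
exists P; congr f; apply: functional_extensionality => j.
by rewrite /upd; case: eqP => // ->.
Qed.

Lemma efficient_unanimous (Q : pref X) a :
  efficient f -> is_top Q a -> f (fun _ => Q) = a.
Proof.
move=> eff ta; apply/eqP/negPn/negP => fa.
by apply: (eff (fun _ => Q)); exists a => _; apply: ta.
Qed.

Lemma top_in_option_set i (Q : pref X) a :
  efficient f -> is_top Q a -> option_set f i Q a.
Proof.
move=> eff ta; rewrite -(efficient_unanimous eff ta).
exact: option_set_outcome i (fun _ => Q).
Qed.

Lemma tops_only_upd (P : profile n X) i (Q Q' : pref X) a :
  tops_only f -> is_top Q a -> is_top Q' a -> f (upd P i Q) = f (upd P i Q').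
Proof.
move=> tops ta ta'; apply: tops => j x; rewrite /upd; case: (j == i) => //.
by split=> tx; [rewrite (top_uniq tx ta) | rewrite (top_uniq tx ta')].
Qed.

Lemma SV_sub_V i x : 2 <= #|X| -> SV f i x -> V f i x.
Proof.
move=> X2 sv; have [b bx] := exists_other X2 x.
exists (keyed_pref b x false); apply/sv => tx.
by move: bx; rewrite (keyed_pref_topE tx) eqxx.
Qed.

Lemma NOM_of_strong_vetoes :
  efficient f -> (forall i x, V f i x -> SV f i x) -> NOM f.
Proof.
move=> eff strong i Pi Pi' [_ [[w' [w [[_ worst'] [[Ow _] w'w]]]]|]].
- have w'_neq_w : w' != w by apply: contraTneq w'w => ->; rewrite pref_irr.
  have vetoed : vetoes_via f i Pi' w.
    by move=> Ow'; apply: pref_asym w'w (worst' _ Ow' _); rewrite eq_sym.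
  have sv : SV f i w by apply: strong; exists Pi'.
  have tw : is_top Pi w.
    by apply: NNPP => ntw; apply: (sv Pi).2 ntw Ow.
  by rewrite top_maximal in w'w.
- move=> [b' [b [_ [[_ best] b'b]]]].
  have [a ta] := exists_top Pi b.
  have ba : b = a.
    apply/eqP/negPn/negP => ba.
    have Oa := top_in_option_set i eff ta.
    by move: (best a Oa); rewrite eq_sym top_maximal // => /(_ ba).
  by rewrite ba top_maximal in b'b.
Qed.

Lemma strong_vetoes_of_NOM :
  efficient f -> tops_only f -> NOM f -> forall i x, V f i x -> SV f i x.
Proof.
move=> eff tops nom i x [Q vetoQ] Pi; split=> [vetoPi tx | ntx [P fPx]].
  exact: vetoPi (top_in_option_set i eff tx).
have [b tb] := exists_top Pi x.
have xb : x != b by apply: contra_notN ntx => /eqP ->.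
pose R := keyed_pref b x true.
have fRx : f (upd P i R) = x.
  by rewrite -fPx; apply: tops_only_upd tops _ tb; apply: keyed_pref_top.
have not_x y : option_set f i Q y -> y != x.
  by move=> Oy; apply: contra_notN vetoQ => /eqP <-.
apply: (nom i R Q); split.
  by exists P; rewrite fRx; apply: keyed_pref_last => //; apply: not_x; exists P.
have [w' worstQ] : exists w', worst_of R (option_set f i Q) w'.
  by apply: exists_worst_of; exists (f (upd P i Q)), P.
left; exists w', x; split=> //; split.
  by split=> [|z _ zx]; [exists P | exact: keyed_pref_last xb zx].
exact: keyed_pref_last xb (not_x _ worstQ.1).
Qed.

Lemma NOM_iff_strong_vetoes :
  2 <= #|X| -> efficient f -> tops_only f ->
  NOM f <-> forall i, set_eq (SV f i) (V f i).
Proof.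
move=> X2 eff tops; split=> [nom i x | strong].
  by split; [exact: SV_sub_V | exact: strong_vetoes_of_NOM].
by apply: NOM_of_strong_vetoes => // i x; apply: (strong i x).2.
Qed.

Lemma SV_agents_agree i j x z :
  efficient f -> i != j -> SV f i x -> SV f j z -> x = z.
Proof.
move=> eff ij svx svz; apply/eqP/negPn/negP => xz.
pose P k := if k == j then keyed_pref x z false else keyed_pref z x false.
have Pi : P i = keyed_pref z x false by rewrite /P (negbTE ij).
have Pj : P j = keyed_pref x z false by rewrite /P eqxx.
have fPx : f P != x.
  apply/eqP => fPx; have := option_set_outcome i P; rewrite fPx Pi.
  by apply: (svx _).2 => /keyed_pref_topE zx; rewrite zx eqxx in xz.
have fPz : f P != z.
  apply/eqP => fPz; have := option_set_outcome j P; rewrite fPz Pj.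
  by apply: (svz _).2 => /keyed_pref_topE zx; rewrite zx eqxx in xz.
apply: (eff P); exists x => k; rewrite /P.
case: (k == j); first exact: keyed_pref_top.
by apply: keyed_pref_second; rewrite // eq_sym.
Qed.

End Rules.

Theorem corollary1 (n : nat) (X : finType) (f : rule n X) :
  2 <= n -> 2 <= #|X| ->
  onto f -> efficient f -> tops_only f ->
  (NOM f <->
   ((forall i j : 'I_n, nonempty (V f i) -> nonempty (V f j) -> i = j) /\
    (forall i : 'I_n, nonempty (V f i) -> set_eq (SV f i) (V f i))
   \/
   (exists y : X, forall i : 'I_n,
       set_eq (SV f i) (V f i) /\ (forall x, V f i x -> x = y)))).
Proof.
move=> _ X2 _ eff tops; apply: iff_trans (NOM_iff_strong_vetoes X2 eff tops) _.
split=> [strong | [[_ strong] | [y strong]] i]; last first.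
- exact: (strong i).1.
- have [/strong // | noV] := classic (nonempty (V f i)).
  by move=> x; split=> [/(SV_sub_V X2) // | Vx]; case: noV; exists x.
have agree i j x z : i != j -> V f i x -> V f j z -> x = z.
  by move=> ij /(strong i x) svx /(strong j z); apply: SV_agents_agree eff ij svx.
have [[i [j [ij [[x Vx] [z Vz]]]]] | unique] :=
  classic (exists i j, i != j /\ nonempty (V f i) /\ nonempty (V f j)).
  right; exists x => k; split=> // w Vw.
  have [ki | ki] := eqVneq k i; last exact: agree Vw Vx.
  by rewrite ki in Vw; rewrite (agree i j w z) // (agree i j x z).
left; split=> // i j Vi Vj; apply/eqP/negPn/negP => ij.
by apply: unique; exists i, j.
Qed.
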